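(* Let $N_f\ge 2$ be an integer, let $\beta>0$, $\lambda>0$, $r_c>0$, and let $p_r(i)=\frac{i^{-\beta}}{\sum_{k=1}^{N_f}k^{-\beta}}$ for $i=1,\dots,N_f$. Consider the optimization problem $$\max_{p_c(1),\dots,p_c(N_f)}\ \sum_{i=1}^{N_f}p_r(i)\left(1-e^{-\lambda p_c(i)\pi r_c^2}\right)\quad\text{s.t. } \sum_{i=1}^{N_f}p_c(i)=1,\ p_c(i)\ge 0,\ i=1,\dots,N_f.$$ If $\frac{N_f^{N_f}}{N_f!}<e^{\frac{\lambda\pi r_c^2}{\beta}}$, then the optimal solution is $$p_c^*(i)=\frac{1}{N_f}\left(1+\frac{\beta}{\lambda\pi r_c^2}\sum_{j=1}^{N_f}\ln\Big(\frac{j}{i}\Big)\right),\quad i=1,\dots,N_f.$$ Otherwise, the optimal solution is $$p_c^*(i)=\begin{cases}\frac{1}{i^*}\left(1+\frac{\beta}{\lambda\pi r_c^2}\sum_{j=1}^{i^*}\ln\Big(\frac{j}{i}\Big)\right), & i\le i^*,\\ 0, & i^*<i\le N_f,\end{cases}$$ for an integer $i^*\in\{1,\dots,N_f\}$ satisfying $\frac{\lambda\pi r_c^2}{\beta}-1\le i^*\le \frac{\lambda\pi r_c^2}{\beta}+\ln\big(\sqrt{2\pi N_f}\big)+1$.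
   Context: $p_r$ is the Zipf popularity distribution over a catalog of $N_f$ files; $p_c(i)$ is the probability that a user caches file $i$; the objective is the probability (offloading opportunity) that a file requested by a user is cached by some user within distance $r_c$ when users form a Poisson point process of density $\lambda$ in the plane. *)

From Stdlib Require Import Reals Lra Lia.
Open Scope R_scope.

(* sum1 f n = f 1 + f 2 + ... + f n  (files are indexed from 1) *)
Fixpoint sum1 (f : nat -> R) (n : nat) : R :=
  match n with
  | O => 0
  | S m => sum1 f m + f (S m)
  end.

Definition pr (beta : R) (Nf : nat) (i : nat) : R :=
  Rpower (INR i) (- beta) / sum1 (fun k => Rpower (INR k) (- beta)) Nf.

Definition offload (beta lam rc : R) (Nf : nat) (pc : nat -> R) : R :=
  sum1 (fun i => pr beta Nf i * (1 - exp (- (lam * pc i * PI * rc ^ 2)))) Nf.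

Definition feasible (Nf : nat) (pc : nat -> R) : Prop :=
  sum1 pc Nf = 1 /\ (forall i, (1 <= i <= Nf)%nat -> 0 <= pc i).

Definition optimal_solution (beta lam rc : R) (Nf : nat) (p : nat -> R) : Prop :=
  feasible Nf p /\
  (forall q, feasible Nf q -> offload beta lam rc Nf q <= offload beta lam rc Nf p) /\
  (forall q, feasible Nf q -> offload beta lam rc Nf q = offload beta lam rc Nf p ->
     forall i, (1 <= i <= Nf)%nat -> q i = p i).

From Stdlib Require Import Reals Arith Lra Lia.
From Coquelicot Require Import Coquelicot.
Open Scope R_scope.

(* The objective is a sum of strictly concave functions of the p_c(i), so the KKT conditions
   are sufficient and determine the maximizer uniquely: every file i with p_c(i) > 0 must have
   the same marginal gain p_r(i) c e^{-c p_c(i)} (c = lambda pi r_c^2), and every other file one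
   no larger. Since p_r(i) is proportional to i^{-beta}, the active files are 1..m and
   c p_c(i) = K - beta ln i, with the level K fixed by sum p_c = 1. This "water-filling"
   allocation is positive iff g(m) < c/beta and leaves files beyond m inactive iff
   c/beta <= g(m+1), where g(m) = ln (m^m / m!). Hence all N_f files are active when
   g(N_f) < c/beta, and otherwise i* is an m with g(m) < c/beta <= g(m+1); the elementary
   bounds m - 1 - (ln m)/2 <= g(m) <= m - 1 give the stated range for i*. *)

Lemma sum1_ext (f g : nat -> R) (n : nat) :
  (forall i, (1 <= i <= n)%nat -> f i = g i) -> sum1 f n = sum1 g n.
Proof.
  induction n as [|n IH]; intros Hfg; simpl; [reflexivity|].
  rewrite IH, Hfg; [reflexivity | lia | intros; apply Hfg; lia].
Qed.

Lemma sum1_minus (f g : nat -> R) (n : nat) :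
  sum1 (fun i => f i - g i) n = sum1 f n - sum1 g n.
Proof. induction n as [|n IH]; simpl; [ring|]. rewrite IH; ring. Qed.

Lemma sum1_mult_l (a : R) (f : nat -> R) (n : nat) :
  sum1 (fun i => a * f i) n = a * sum1 f n.
Proof. induction n as [|n IH]; simpl; [ring|]. rewrite IH; ring. Qed.

Lemma sum1_const (a : R) (n : nat) : sum1 (fun _ => a) n = INR n * a.
Proof. induction n as [|n IH]; simpl sum1; [simpl; ring|]. rewrite IH, S_INR; ring. Qed.

Lemma sum1_nonneg (f : nat -> R) (n : nat) :
  (forall i, (1 <= i <= n)%nat -> 0 <= f i) -> 0 <= sum1 f n.
Proof.
  induction n as [|n IH]; intros Hf; simpl; [lra|].
  assert (0 <= sum1 f n) by (apply IH; intros; apply Hf; lia).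
  assert (0 <= f (S n)) by (apply Hf; lia).
  lra.
Qed.

Lemma sum1_pos (f : nat -> R) (n : nat) :
  (1 <= n)%nat -> (forall i, (1 <= i <= n)%nat -> 0 < f i) -> 0 < sum1 f n.
Proof.
  destruct n as [|n]; intros Hn Hf; [lia|]; simpl.
  assert (0 <= sum1 f n) by (apply sum1_nonneg; intros; apply Rlt_le, Hf; lia).
  assert (0 < f (S n)) by (apply Hf; lia).
  lra.
Qed.

Lemma sum1_nonneg_eq_0 (f : nat -> R) (n : nat) :
  (forall i, (1 <= i <= n)%nat -> 0 <= f i) -> sum1 f n = 0 ->
  forall i, (1 <= i <= n)%nat -> f i = 0.
Proof.
  induction n as [|n IH]; simpl; intros Hf Hsum i Hi; [lia|].
  assert (0 <= sum1 f n) by (apply sum1_nonneg; intros; apply Hf; lia).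
  assert (0 <= f (S n)) by (apply Hf; lia).
  destruct (Nat.eq_dec i (S n)) as [->|Hne]; [lra|].
  apply IH; [intros; apply Hf; lia | lra | lia].
Qed.

Lemma sum1_trunc (f : nat -> R) (m n : nat) :
  (m <= n)%nat -> (forall i, (m < i <= n)%nat -> f i = 0) -> sum1 f n = sum1 f m.
Proof.
  induction n as [|n IH]; intros Hmn Hf.
  - replace m with 0%nat by lia; reflexivity.
  - destruct (Nat.eq_dec m (S n)) as [->|Hne]; [reflexivity|].
    simpl; rewrite Hf, IH by (lia || (intros; apply Hf; lia)); ring.
Qed.
Lemma exp_decrement_le_tangent (w c p q : R) : 0 < w -> 0 < c ->
  w * (exp (- (c * p)) - exp (- (c * q))) <= w * c * exp (- (c * p)) * (q - p) /\
  (w * (exp (- (c * p)) - exp (- (c * q))) = w * c * exp (- (c * p)) * (q - p) -> q = p).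
Proof.
  intros Hw Hc.
  set (x := - (c * (q - p))).
  assert (Hsplit : exp (- (c * q)) = exp (- (c * p)) * exp x)
    by (rewrite <- exp_plus; f_equal; unfold x; ring).
  assert (HwE : 0 < w * exp (- (c * p))) by (apply Rmult_lt_0_compat; [lra | apply exp_pos]).
  replace (w * (exp (- (c * p)) - exp (- (c * q)))) with (w * exp (- (c * p)) * (1 - exp x))
    by (rewrite Hsplit; ring).
  replace (w * c * exp (- (c * p)) * (q - p)) with (w * exp (- (c * p)) * (- x))
    by (unfold x; ring).
  split.
  - apply Rmult_le_compat_l; [lra|]. pose proof (exp_ineq1_le x); lra.
  - intros Heq. apply Rmult_eq_reg_l in Heq; [|lra].
    destruct (Req_dec x 0) as [Hx0|Hx0].
    + unfold x in Hx0. nra.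
    + pose proof (exp_ineq1 x Hx0); lra.
Qed.

Lemma kkt_term_slack (w c mu p q : R) : 0 < w -> 0 < c -> 0 <= q ->
  w * c * exp (- (c * p)) <= mu -> p = 0 \/ w * c * exp (- (c * p)) = mu ->
  0 <= mu * (q - p) - w * (exp (- (c * p)) - exp (- (c * q))) /\
  (mu * (q - p) - w * (exp (- (c * p)) - exp (- (c * q))) = 0 -> q = p).
Proof.
  intros Hw Hc Hq Hmu Hslack.
  destruct (exp_decrement_le_tangent w c p q Hw Hc) as [Htan Heq].
  assert (Hdual : w * c * exp (- (c * p)) * (q - p) <= mu * (q - p)).
  { destruct Hslack as [-> | <-]; [|lra].
    apply Rmult_le_compat_r; lra. }
  split; [lra|]. intros Hzero. apply Heq. lra.
Qed.

Lemma pr_pos (beta : R) (Nf i : nat) : (1 <= Nf)%nat -> 0 < pr beta Nf i.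
Proof.
  intros HNf. unfold pr, Rpower.
  apply Rdiv_lt_0_compat; [apply exp_pos|].
  apply sum1_pos; [lia|]. intros; apply exp_pos.
Qed.

Lemma offload_eq (beta lam rc : R) (Nf : nat) (q : nat -> R) :
  offload beta lam rc Nf q =
  sum1 (fun i => pr beta Nf i * (1 - exp (- (lam * PI * rc ^ 2 * q i)))) Nf.
Proof.
  apply sum1_ext. intros i _. do 4 f_equal. ring.
Qed.

(* The slack of each term is nonnegative, and the slacks sum to the loss in the objective
   because both allocations have total mass 1. *)
Lemma kkt_optimal (beta lam rc mu : R) (Nf : nat) (p : nat -> R) :
  0 < lam * PI * rc ^ 2 -> feasible Nf p ->
  (forall i, (1 <= i <= Nf)%nat ->
     pr beta Nf i * (lam * PI * rc ^ 2) * exp (- (lam * PI * rc ^ 2 * p i)) <= mu /\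
     (p i = 0 \/ pr beta Nf i * (lam * PI * rc ^ 2) * exp (- (lam * PI * rc ^ 2 * p i)) = mu)) ->
  optimal_solution beta lam rc Nf p.
Proof.
  set (c := lam * PI * rc ^ 2). intros Hc [Hp1 Hp0] Hkkt.
  set (slack := fun (q : nat -> R) i =>
         mu * (q i - p i) - pr beta Nf i * (exp (- (c * p i)) - exp (- (c * q i)))).
  assert (Hslack : forall q, feasible Nf q -> forall i, (1 <= i <= Nf)%nat ->
            0 <= slack q i /\ (slack q i = 0 -> q i = p i)).
  { intros q [_ Hq0] i Hi. destruct (Hkkt i Hi) as [Hmu Hcs].
    apply kkt_term_slack; auto. apply pr_pos; lia. }
  assert (Hloss : forall q, feasible Nf q ->
            sum1 (slack q) Nf = offload beta lam rc Nf p - offload beta lam rc Nf q).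
  { intros q [Hq1 _]. rewrite !offload_eq. fold c. unfold slack.
    rewrite sum1_minus, sum1_mult_l, sum1_minus, Hq1, Hp1.
    rewrite (sum1_ext _ (fun i => pr beta Nf i * (1 - exp (- (c * q i))) -
                                  pr beta Nf i * (1 - exp (- (c * p i)))))
      by (intros; ring).
    rewrite sum1_minus. ring. }
  split; [split; assumption | split].
  - intros q Hq.
    assert (Hsum : 0 <= sum1 (slack q) Nf) by (apply sum1_nonneg; intros; apply Hslack; auto).
    rewrite Hloss in Hsum by assumption. lra.
  - intros q Hq Heq i Hi. apply (Hslack q Hq i Hi).
    apply (sum1_nonneg_eq_0 (slack q) Nf); auto.
    + intros j Hj; apply Hslack; auto.
    + rewrite Hloss by assumption. lra.
Qed.

Lemma optimal_solution_ext (beta lam rc : R) (Nf : nat) (p p' : nat -> R) :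
  (forall i, (1 <= i <= Nf)%nat -> p i = p' i) ->
  optimal_solution beta lam rc Nf p -> optimal_solution beta lam rc Nf p'.
Proof.
  intros Hpp' [[Hp1 Hp0] [Hmax Huniq]].
  assert (Hoff : offload beta lam rc Nf p = offload beta lam rc Nf p')
    by (apply sum1_ext; intros i Hi; rewrite Hpp'; auto).
  split; [split | split].
  - rewrite <- Hp1. symmetry. apply sum1_ext. auto.
  - intros i Hi. rewrite <- Hpp'; auto.
  - intros q Hq. rewrite <- Hoff. auto.
  - intros q Hq Heq i Hi. rewrite <- Hpp'; auto. apply Huniq; congruence.
Qed.

Lemma ln_fact_sum1 (n : nat) : ln (INR (fact n)) = sum1 (fun j => ln (INR j)) n.
Proof.
  induction n as [|n IH]; [simpl; apply ln_1|].
  cbn [sum1]. rewrite <- IH, fact_simpl, mult_INR, ln_mult; [ring | |].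
  - apply lt_0_INR; lia.
  - apply lt_0_INR, lt_O_fact.
Qed.

Lemma sum1_ln_div (i m : nat) : (1 <= i)%nat ->
  sum1 (fun j => ln (INR j / INR i)) m = ln (INR (fact m)) - INR m * ln (INR i).
Proof.
  intros Hi. rewrite ln_fact_sum1, <- sum1_const, <- sum1_minus.
  apply sum1_ext. intros j Hj. apply ln_div; apply lt_0_INR; lia.
Qed.

Lemma ln_sqrt (x : R) : 0 < x -> ln (sqrt x) = ln x / 2.
Proof.
  intros Hx. assert (0 < sqrt x) by (apply sqrt_lt_R0; assumption).
  rewrite <- (sqrt_sqrt x) at 2 by lra. rewrite ln_mult by assumption. field.
Qed.

(* By Stirling's formula [stirling_gap n = n - ln (sqrt (2 pi n)) + o(1)]; the two bounds
   below are the crude forms of this estimate that locate [i*]. *)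
Definition stirling_gap (n : nat) : R := INR n * ln (INR n) - ln (INR (fact n)).

Lemma ln_pow_div_fact (n : nat) : (1 <= n)%nat ->
  ln (INR n ^ n / INR (fact n)) = stirling_gap n.
Proof.
  intros Hn. assert (0 < INR n) by (apply lt_0_INR; lia).
  rewrite ln_div, ln_pow; [reflexivity | assumption | apply pow_lt; assumption |].
  apply lt_0_INR, lt_O_fact.
Qed.

Lemma stirling_gap_1 : stirling_gap 1 = 0.
Proof. unfold stirling_gap. simpl. rewrite ln_1. ring. Qed.

Lemma stirling_gap_succ (n : nat) :
  stirling_gap (S n) = INR n * ln (INR (S n)) - ln (INR (fact n)).
Proof.
  unfold stirling_gap. rewrite fact_simpl, mult_INR, ln_mult, S_INR; [ring | |].
  - apply lt_0_INR; lia.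
  - apply lt_0_INR, lt_O_fact.
Qed.

Lemma stirling_gap_succ_sub (n : nat) :
  stirling_gap (S n) - stirling_gap n = INR n * (ln (INR n + 1) - ln (INR n)).
Proof. rewrite stirling_gap_succ, S_INR. unfold stirling_gap. ring. Qed.

Lemma ln_1_plus_ge (x : R) : 0 <= x -> 2 * x / (2 + x) <= ln (1 + x).
Proof.
  intros Hx. destruct (Req_dec x 0) as [->|Hx0].
  { rewrite !Rplus_0_r, ln_1. unfold Rdiv. lra. }
  set (f := fun y => ln (1 + y) - 2 * y / (2 + y)).
  set (f' := fun y => y ^ 2 / ((1 + y) * (2 + y) ^ 2)).
  destruct (MVT_cor2 f f' 0 x) as [y [Hdiff Hy]]; [lra | |].
  - intros y Hy. apply is_derive_Reals. unfold f, f'.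
    auto_derive; [lra|]. field. lra.
  - assert (0 <= f' y) by (unfold f'; apply Rmult_le_pos; [nra|]; apply Rlt_le, Rinv_0_lt_compat; nra).
    assert (f 0 = 0) by (unfold f; rewrite Rplus_0_r, ln_1; field).
    unfold f in *. nra.
Qed.

Lemma ln_succ_sub_le (x : R) : 0 < x -> ln (x + 1) - ln x <= 1 / x.
Proof.
  intros Hx. rewrite <- ln_div by lra.
  pose proof (exp_ineq1_le (ln ((x + 1) / x))) as Hexp.
  rewrite exp_ln in Hexp by (apply Rdiv_lt_0_compat; lra).
  assert ((x + 1) / x = 1 + 1 / x) by (field; lra). lra.
Qed.

Lemma ln_succ_sub_ge (x : R) : 0 < x -> 2 / (2 * x + 1) <= ln (x + 1) - ln x.
Proof.
  intros Hx. rewrite <- ln_div by lra.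
  replace ((x + 1) / x) with (1 + 1 / x) by (field; lra).
  replace (2 / (2 * x + 1)) with (2 * (1 / x) / (2 + 1 / x)) by (field; lra).
  apply ln_1_plus_ge. apply Rlt_le, Rdiv_lt_0_compat; lra.
Qed.

Lemma stirling_gap_le (n : nat) : (1 <= n)%nat -> stirling_gap n <= INR n - 1.
Proof.
  induction n as [|n IH]; intros Hn; [lia|].
  destruct (Nat.eq_dec n 0) as [->|Hn0]; [rewrite stirling_gap_1; simpl; lra|].
  assert (Hpos : 0 < INR n) by (apply lt_0_INR; lia).
  pose proof (stirling_gap_succ_sub n) as Hstep.
  pose proof (ln_succ_sub_le (INR n) Hpos) as Hln.
  assert (INR n * (ln (INR n + 1) - ln (INR n)) <= 1).
  { replace 1 with (INR n * (1 / INR n)) at 2 by (field; lra).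
    apply Rmult_le_compat_l; lra. }
  specialize (IH ltac:(lia)). rewrite S_INR. lra.
Qed.

Lemma stirling_gap_ge (n : nat) : (1 <= n)%nat -> INR n - 1 - ln (INR n) / 2 <= stirling_gap n.
Proof.
  induction n as [|n IH]; intros Hn; [lia|].
  destruct (Nat.eq_dec n 0) as [->|Hn0]; [rewrite stirling_gap_1; simpl; rewrite ln_1; lra|].
  assert (Hpos : 0 < INR n) by (apply lt_0_INR; lia).
  pose proof (stirling_gap_succ_sub n) as Hstep.
  pose proof (ln_succ_sub_ge (INR n) Hpos) as Hln.
  assert (1 <= (INR n + 1 / 2) * (ln (INR n + 1) - ln (INR n))).
  { replace 1 with ((INR n + 1 / 2) * (2 / (2 * INR n + 1))) at 1 by (field; lra).
    apply Rmult_le_compat_l; lra. }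
  specialize (IH ltac:(lia)). rewrite S_INR. lra.
Qed.

Lemma last_index_below (f : nat -> R) (t : R) (n : nat) : f 1%nat < t -> (1 <= n)%nat ->
  exists m, (1 <= m <= n)%nat /\ f m < t /\ ((m < n)%nat -> t <= f (S m)).
Proof.
  intros H1. induction n as [|n IH]; intros Hn; [lia|].
  destruct (Nat.eq_dec n 0) as [->|Hn0]; [exists 1%nat; split; [lia | split; [assumption | lia]]|].
  destruct (Rlt_le_dec (f (S n)) t) as [Hlt|Hge].
  - exists (S n). split; [lia | split; [assumption | lia]].
  - destruct (IH ltac:(lia)) as [m [Hm [Hfm Hnext]]].
    exists m. split; [lia | split; [assumption |]]. intros Hmn.
    destruct (Nat.eq_dec m n) as [->|Hne]; [assumption | apply Hnext; lia].
Qed.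

Definition water_level (beta c : R) (m : nat) : R := (c + beta * ln (INR (fact m))) / INR m.

Definition waterfill (beta c : R) (m i : nat) : R :=
  if (i <=? m)%nat then (water_level beta c m - beta * ln (INR i)) / c else 0.

Lemma waterfill_closed_form (beta c : R) (m i : nat) : c <> 0 -> (1 <= i)%nat -> (1 <= m)%nat ->
  waterfill beta c m i =
  if (i <=? m)%nat
  then / INR m * (1 + beta / c * sum1 (fun j => ln (INR j / INR i)) m)
  else 0.
Proof.
  intros Hc Hi Hm. unfold waterfill. destruct (i <=? m)%nat; [|reflexivity].
  rewrite sum1_ln_div by assumption. unfold water_level.
  field. split; [assumption | apply not_0_INR; lia].
Qed.

Lemma water_level_gt_ln (beta c : R) (m : nat) : 0 < beta -> (1 <= m)%nat ->
  stirling_gap m < c / beta -> beta * ln (INR m) < water_level beta c m.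
Proof.
  intros Hb Hm Hgap. assert (Hmpos : 0 < INR m) by (apply lt_0_INR; lia).
  assert (beta * stirling_gap m < c).
  { apply (Rmult_lt_compat_l beta) in Hgap; [|assumption].
    replace (beta * (c / beta)) with c in Hgap by (field; lra). exact Hgap. }
  apply (Rmult_lt_reg_r (INR m)); [assumption|].
  unfold water_level, stirling_gap in *. field_simplify; lra.
Qed.

Lemma water_level_le_ln_succ (beta c : R) (m : nat) : 0 < beta -> (1 <= m)%nat ->
  c / beta <= stirling_gap (S m) -> water_level beta c m <= beta * ln (INR (S m)).
Proof.
  intros Hb Hm Hgap. assert (Hmpos : 0 < INR m) by (apply lt_0_INR; lia).
  assert (c <= beta * stirling_gap (S m)).
  { apply (Rmult_le_compat_l beta) in Hgap; [|lra].
    replace (beta * (c / beta)) with c in Hgap by (field; lra). exact Hgap. }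
  rewrite stirling_gap_succ in *.
  apply (Rmult_le_reg_r (INR m)); [assumption|].
  unfold water_level. field_simplify; [nra | lra].
Qed.

Lemma waterfill_feasible (beta c : R) (m Nf : nat) : 0 < beta -> 0 < c -> (1 <= m <= Nf)%nat ->
  stirling_gap m < c / beta -> feasible Nf (waterfill beta c m).
Proof.
  intros Hb Hc Hm Hgap. unfold waterfill. split.
  - rewrite (sum1_trunc _ m Nf) by (lia || (intros i Hi; replace (i <=? m)%nat with false
      by (symmetry; apply Nat.leb_gt; lia); reflexivity)).
    rewrite (sum1_ext _ (fun i => / c * water_level beta c m - beta / c * ln (INR i)))
      by (intros i Hi; replace (i <=? m)%nat with true by (symmetry; apply Nat.leb_le; lia);
          field; lra).
    rewrite sum1_minus, sum1_const, sum1_mult_l, <- ln_fact_sum1.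
    unfold water_level. field. split; [lra | apply not_0_INR; lia].
  - intros i Hi. destruct (Nat.leb_spec i m) as [Him|Him]; [|lra].
    pose proof (water_level_gt_ln beta c m Hb ltac:(lia) Hgap).
    assert (ln (INR i) <= ln (INR m)) by (apply ln_le; [apply lt_0_INR; lia | apply le_INR; lia]).
    apply Rmult_le_pos; [nra | apply Rlt_le, Rinv_0_lt_compat; assumption].
Qed.

(* The multiplier is the common marginal gain [c e^{-K} / Z] of the active files. *)
Lemma waterfill_optimal (beta lam rc : R) (m Nf : nat) :
  0 < beta -> 0 < lam * PI * rc ^ 2 -> (1 <= m <= Nf)%nat ->
  stirling_gap m < lam * PI * rc ^ 2 / beta ->
  ((m < Nf)%nat -> lam * PI * rc ^ 2 / beta <= stirling_gap (S m)) ->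
  optimal_solution beta lam rc Nf (waterfill beta (lam * PI * rc ^ 2) m).
Proof.
  set (c := lam * PI * rc ^ 2). intros Hb Hc Hm Hgap Hgap_succ.
  set (K := water_level beta c m).
  set (Z := sum1 (fun k => Rpower (INR k) (- beta)) Nf).
  assert (HZ : 0 < Z) by (apply sum1_pos; [lia | intros; apply exp_pos]).
  apply (kkt_optimal _ _ _ (c * exp (- K) / Z)); [assumption | apply waterfill_feasible; assumption |].
  intros i Hi. unfold pr. fold Z c. unfold Rpower, waterfill. fold K.
  destruct (Nat.leb_spec i m) as [Him|Him].
  - replace (exp (- beta * ln (INR i)) / Z * c * exp (- (c * ((K - beta * ln (INR i)) / c))))
      with (c * exp (- K) / Z).
    + split; [lra | right; reflexivity].
    + replace (- (c * ((K - beta * ln (INR i)) / c))) with (- K + beta * ln (INR i)) by (field; lra).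
      replace (- beta * ln (INR i)) with (- (beta * ln (INR i))) by ring.
      rewrite exp_plus, (exp_Ropp (beta * ln (INR i))).
      field. split; [apply Rgt_not_eq, exp_pos | lra].
  - rewrite Rmult_0_r, Ropp_0, exp_0, Rmult_1_r. split; [|left; reflexivity].
    assert (K <= beta * ln (INR i)).
    { apply (Rle_trans _ (beta * ln (INR (S m)))).
      - apply water_level_le_ln_succ, Hgap_succ; lia || assumption.
      - apply Rmult_le_compat_l; [lra|]. apply ln_le; [apply lt_0_INR | apply le_INR]; lia. }
    assert (exp (- beta * ln (INR i)) <= exp (- K)).
    { destruct (Req_dec K (beta * ln (INR i))) as [Heq|Hne];
        [rewrite Heq, Ropp_mult_distr_l; lra | apply Rlt_le, exp_increasing; lra]. }
    replace (exp (- beta * ln (INR i)) / Z * c) with (c / Z * exp (- beta * ln (INR i)))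
      by (field; lra).
    replace (c * exp (- K) / Z) with (c / Z * exp (- K)) by (field; lra).
    apply Rmult_le_compat_l; [apply Rlt_le, Rdiv_lt_0_compat |]; lra.
Qed.

Theorem proposition1 (Nf : nat) (beta lam rc : R) :
  (2 <= Nf)%nat -> 0 < beta -> 0 < lam -> 0 < rc ->
  (INR Nf ^ Nf / INR (fact Nf) < exp (lam * PI * rc ^ 2 / beta) ->
     optimal_solution beta lam rc Nf
       (fun i => / INR Nf *
          (1 + beta / (lam * PI * rc ^ 2) *
               sum1 (fun j => ln (INR j / INR i)) Nf)))
  /\
  (~ (INR Nf ^ Nf / INR (fact Nf) < exp (lam * PI * rc ^ 2 / beta)) ->
     exists istar : nat,
       (1 <= istar <= Nf)%nat /\
       lam * PI * rc ^ 2 / beta - 1 <= INR istar /\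
       INR istar <= lam * PI * rc ^ 2 / beta + ln (sqrt (2 * PI * INR Nf)) + 1 /\
       optimal_solution beta lam rc Nf
         (fun i => if (i <=? istar)%nat
                   then / INR istar *
                        (1 + beta / (lam * PI * rc ^ 2) *
                             sum1 (fun j => ln (INR j / INR i)) istar)
                   else 0)).
Proof.
  intros HNf Hb Hl Hr.
  set (c := lam * PI * rc ^ 2).
  assert (Hc : 0 < c)
    by (apply Rmult_lt_0_compat; [apply Rmult_lt_0_compat, PI_RGT_0 | apply pow_lt]; assumption).
  assert (Hratio : INR Nf ^ Nf / INR (fact Nf) = exp (stirling_gap Nf))
    by (rewrite <- ln_pow_div_fact by lia; symmetry; apply exp_ln;
        apply Rdiv_lt_0_compat; [apply pow_lt, lt_0_INR | apply lt_0_INR, lt_O_fact]; lia).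
  rewrite Hratio. split.
  - intros Hlt%exp_lt_inv.
    apply (optimal_solution_ext _ _ _ _ (waterfill beta c Nf)).
    + intros i Hi. rewrite waterfill_closed_form by (lra || lia).
      replace (i <=? Nf)%nat with true by (symmetry; apply Nat.leb_le; lia). reflexivity.
    + apply waterfill_optimal; [assumption .. | lia | assumption | lia].
  - intros Hge. assert (Hgap : c / beta <= stirling_gap Nf)
      by (destruct (Rle_lt_dec (c / beta) (stirling_gap Nf)); [assumption |];
          exfalso; apply Hge, exp_increasing; assumption).
    destruct (last_index_below stirling_gap (c / beta) Nf) as [m [Hm [Hgap_m Hgap_succ]]];
      [rewrite stirling_gap_1; apply Rdiv_lt_0_compat; assumption | lia |].
    assert (Hmlt : (m < Nf)%nat) by (destruct (Nat.eq_dec m Nf) as [->|]; [lra | lia]).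
    exists m. split; [assumption | split; [| split]].
    + pose proof (stirling_gap_le (S m) ltac:(lia)). rewrite S_INR in *.
      specialize (Hgap_succ Hmlt). lra.
    + pose proof (stirling_gap_ge m ltac:(lia)). pose proof PI2_1.
      assert (0 < INR m <= INR Nf) by (split; [apply lt_0_INR | apply le_INR]; lia).
      assert (ln (INR m) <= ln (2 * PI * INR Nf)) by (apply ln_le; nra).
      rewrite ln_sqrt by nra. lra.
    + apply (optimal_solution_ext _ _ _ _ (waterfill beta c m)).
      * intros i Hi. apply waterfill_closed_form; lra || lia.
      * apply waterfill_optimal; [assumption .. | assumption].
Qed.
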